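(* Let $k\ge1$ and let $g_1,\dots,g_n$ be the columns of $G_k^\beta$. If $g_i=\lambda g_j$ for some $i,j\in\{1,\dots,n\}$ and $\lambda\in R$, then $\lambda=1$ and $i=j$.
   Context: Let $R$ be a finite commutative chain ring with maximal ideal $\langle\gamma\rangle$, nilpotency index $s$ and residue field $R/\langle\gamma\rangle\cong\mathbb{F}_q$. Fix coset representatives $T=\{e_0,\dots,e_{q-1}\}$ with $e_0=0,e_1=1$, ordered $e_0<\dots<e_{q-1}$; each $r\in R$ is uniquely $\sum_{i=0}^{s-1}r_i\gamma^i$, $r_i\in T$; order $R$ by $x>y$ iff $x_i>y_i$ in $T$ for the largest $i$ with $x_i\neq y_i$; list $R=\{\rho_0,\dots,\rho_{q^s-1}\}$ increasingly. $\mathbf{a}^{(m)}$ is the constant vector of length $m$. Define $G_1^\alpha=(\rho_0\ \cdots\ \rho_{q^s-1})$ and, for $k>1$, $G_k^\alpha$ as the matrix of $q^s$ column blocks, the $j$-th having first row $\boldsymbol{\rho_j}^{(q^{s(k-1)})}$ and $G_{k-1}^\alpha$ below. List $\langle\gamma\rangle$ increasingly as $a_0\gamma<\dots<a_{q^{s-1}-1}\gamma$ ($a_0\gamma=0$). Define $G_1^\beta=(1)$ and, for $k>1$, $G_k^\beta$ as the matrix with column blocks: first a block with first row $\mathbf{1}^{(q^{s(k-1)})}$ and $G_{k-1}^\alpha$ below; then for each $j=0,\dots,q^{s-1}-1$ a block with first row the constant vector with entry $a_j\gamma$ and $G_{k-1}^\beta$ below. *)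

From HB Require Import structures.
From mathcomp Require Import all_boot all_order all_algebra.
Set Implicit Arguments. Unset Strict Implicit. Unset Printing Implicit Defensive.
Import GRing.Theory.
Local Open Scope ring_scope.

Section ChainRing.
Variable R : finComNzRingType.

Definition is_ideal (I : {set R}) : bool :=
  [&& (0 : R) \in I,
      [forall x in I, forall y in I, x + y \in I] &
      [forall r : R, forall x in I, r * x \in I]].

Definition pideal (g : R) : {set R} := [set g * x | x : R].

Definition chain_ring : Prop :=
  forall I J : {set R}, is_ideal I -> is_ideal J -> (I \subset J) || (J \subset I).

Definition maximal_ideal (M : {set R}) : Prop :=
  [/\ is_ideal M, (1 : R) \notin M &
      forall J : {set R}, is_ideal J -> M \subset J -> J = M \/ (1 : R) \in J].

Definition nilpotency_index (g : R) (s : nat) : Prop :=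
  g ^+ s = 0 /\ forall t, (t < s)%N -> g ^+ t != 0.

(* T = [:: e_0; ...; e_(q-1)] is a set of coset representatives of R/<g>,
   listed in the order e_0 < ... < e_(q-1), with e_0 = 0 and e_1 = 1 *)
Definition coset_reps (g : R) (T : seq R) : Prop :=
  [/\ uniq T, (1 < size T)%N, T`_0 = 0, T`_1 = 1 &
      forall r : R, exists! t, t \in T /\ r - t \in pideal g].

(* rho j : the j-th element of R in the increasing order, 0 <= j < q^s.
   Writing r = sum_(i<s) r_i g^i (r_i in T), the order compares the digit
   indices reverse-lexicographically; hence rho j is the element whose digit
   r_i is e_(d_i), where d_i is the i-th base-q digit of j. *)
Definition rho (g : R) (s : nat) (T : seq R) (j : nat) : R :=
  \sum_(i < s) T`_((j %/ (size T) ^ i) %% size T) * g ^+ i.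

(* a_j g : the j-th element of <g> in increasing order (0 <= j < q^(s-1));
   it is the element with digits (0, d_0(j), d_1(j), ...), i.e. rho (q*j). *)
Definition agam (g : R) (s : nat) (T : seq R) (j : nat) : R :=
  rho g s T (size T * j).

(* columns of G_k^alpha, left to right; each column is a seq of length k *)
Fixpoint alpha_cols (g : R) (s : nat) (T : seq R) (k : nat) : seq (seq R) :=
  match k with
  | 0 => [:: [::]]
  | k'.+1 => [seq rho g s T j :: c | j <- iota 0 (size T ^ s),
                                      c <- alpha_cols g s T k']
  end.

(* columns of G_k^beta, left to right (k >= 1); G_1^beta = (1) *)
Fixpoint beta_cols (g : R) (s : nat) (T : seq R) (k : nat) : seq (seq R) :=
  match k with
  | 0 => [::]
  | 0.+1 => [:: [:: 1]]
  | k'.+1 => [seq 1 :: c | c <- alpha_cols g s T k'] ++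
             [seq agam g s T j :: c | j <- iota 0 (size T ^ s.-1),
                                      c <- beta_cols g s T k']
  end.

End ChainRing.

From HB Require Import structures.
From mathcomp Require Import all_boot all_order all_algebra.
Set Implicit Arguments. Unset Strict Implicit. Unset Printing Implicit Defensive.
Import GRing.Theory.
Local Open Scope ring_scope.

(* Every column of G_k^beta has a pivot: an entry equal to 1 preceded only by
   entries of <gamma>.  If g_i = lambda g_j, comparing the pivot positions of
   g_i and g_j forces lambda = 1 (otherwise 1 would lie in <gamma>), so
   g_i = g_j.  The columns are pairwise distinct because the gamma-adic
   expansion r = sum r_i gamma^i with digits in T is unique, so rho and
   j |-> a_j gamma are injective on their index ranges. *)

Lemma one_sub_nilpotent_invertible (R : pzRingType) (x : R) n :
  x ^+ n = 0 -> exists v, (1 - x) * v = 1.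
Proof.
move=> xn0; exists (\sum_(i < n) x ^+ i).
by rewrite -opprB mulNr -subrX1 xn0 sub0r opprK.
Qed.

Lemma eq_from_base_digits q n a b : (0 < q)%N -> (a < q ^ n)%N -> (b < q ^ n)%N ->
  (forall i, i < n -> a %/ q ^ i %% q = b %/ q ^ i %% q)%N -> a = b.
Proof.
move=> q_gt0; elim: n a b => [|n IHn] a b.
  by rewrite expn0 !ltnS !leqn0 => /eqP -> /eqP ->.
move=> a_lt b_lt eq_digits.
have eq_low := eq_digits 0%N isT; rewrite expn0 !divn1 in eq_low.
rewrite (divn_eq a q) (divn_eq b q) eq_low; congr (_ * _ + _)%N.
apply: IHn; rewrite ?ltn_divLR -?expnSr //.
by move=> i lt_in; have := eq_digits i.+1 lt_in; rewrite expnS !divnMA.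
Qed.

Section PrincipalIdeal.
Variables (R : finComNzRingType) (g : R).
Local Notation I := (pideal g).

Lemma pidealP x : reflect (exists y, x = g * y) (x \in I).
Proof. by apply: (iffP imsetP) => [[y _ ->]|[y ->]]; exists y. Qed.

Lemma mem_pideal x : g * x \in I.
Proof. by apply/pidealP; exists x. Qed.

Lemma pideal0 : 0 \in I.
Proof. by rewrite -(mulr0 g) mem_pideal. Qed.

Lemma pidealD x y : x \in I -> y \in I -> x + y \in I.
Proof. by move=> /pidealP[a ->] /pidealP[b ->]; rewrite -mulrDr mem_pideal. Qed.

Lemma pidealB x y : x \in I -> y \in I -> x - y \in I.
Proof. by move=> /pidealP[a ->] /pidealP[b ->]; rewrite -mulrBr mem_pideal. Qed.

Lemma pidealMl r x : x \in I -> r * x \in I.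
Proof. by move=> /pidealP[a ->]; rewrite mulrCA mem_pideal. Qed.

Lemma pidealMr r x : x \in I -> x * r \in I.
Proof. by rewrite mulrC; apply: pidealMl. Qed.

Lemma maximal_pideal_invertible n u : maximal_ideal I -> g ^+ n = 0 ->
  u \notin I -> exists v, u * v = 1.
Proof.
move=> [_ _ maxI] gn0 uNI.
pose J := [set g * x + u * r | x : R, r : R].
have memJ z : reflect (exists x r, z = g * x + u * r) (z \in J).
  by apply: (iffP imset2P) => [[x r _ _ ->]|[x [r ->]]]; [exists x, r | exists x r].
have J_ideal : is_ideal J.
  apply/and3P; split.
  - by apply/memJ; exists 0, 0; rewrite !mulr0 addr0.
  - apply/forall_inP => _ /memJ[a [b ->]]; apply/forall_inP => _ /memJ[c [d ->]].
    by apply/memJ; exists (a + c), (b + d); rewrite !mulrDr addrACA.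
  - apply/forallP => r; apply/forall_inP => _ /memJ[a [b ->]].
    by apply/memJ; exists (r * a), (r * b); rewrite mulrDr !(mulrCA r).
have subIJ : I \subset J.
  by apply/subsetP => _ /pidealP[a ->]; apply/memJ; exists a, 0; rewrite mulr0 addr0.
have [eqJI | /memJ[x [r one_eq]]] := maxI J J_ideal subIJ.
  by case/negP: uNI; rewrite -eqJI; apply/memJ; exists 0, 1; rewrite mulr0 add0r mulr1.
have gx_nil : (g * x) ^+ n = 0 by rewrite exprMn gn0 mul0r.
have [w gx_inv] := one_sub_nilpotent_invertible gx_nil.
have ur : u * r = 1 - g * x by rewrite one_eq addrAC subrr add0r.
by exists (r * w); rewrite mulrA ur gx_inv.
Qed.

Definition pivot_one (c : seq R) : Prop :=
  exists p, [/\ (p < size c)%N, c`_p = 1 & forall q, (q < p)%N -> c`_q \in I].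

Lemma pivot_one_scale_eq1 (lam : R) c1 c2 : (1 : R) \notin I ->
  pivot_one c1 -> pivot_one c2 -> c1 = [seq lam * x | x <- c2] -> lam = 1.
Proof.
move=> oneNI [p1 [p1_lt c1p1 c1_low]] [p2 [p2_lt c2p2 c2_low]] c1E.
have size_c12 : size c1 = size c2 by rewrite c1E size_map.
have c1_scale q : (q < size c1)%N -> c1`_q = lam * c2`_q.
  by rewrite size_c12 => q_lt; rewrite c1E (nth_map 0).
have [lt12|lt21|eq12] := ltngtP p1 p2.
- by case/negP: oneNI; rewrite -c1p1 c1_scale // pidealMl ?c2_low.
- have lamI : lam \in I by rewrite -[lam]mulr1 -c2p2 -c1_scale ?c1_low // size_c12.
  by case/negP: oneNI; rewrite -c1p1 c1_scale // pidealMr.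
by have := c1_scale p1 p1_lt; rewrite c1p1 eq12 c2p2 mulr1.
Qed.

End PrincipalIdeal.

Section GammaAdicExpansion.
Variables (R : finComNzRingType) (g : R) (s : nat) (T : seq R).
Hypothesis maxI : maximal_ideal (pideal g).
Hypothesis g_nil : nilpotency_index g s.
Hypothesis T_reps : coset_reps g T.
Local Notation I := (pideal g).
Local Notation q := (size T).

Lemma nilpotency_index_gt0 : (0 < s)%N.
Proof. by case: g_nil; case: s => // /eqP; rewrite expr0 oner_eq0. Qed.

Lemma coset_reps_gt1 : (1 < q)%N.
Proof. by case: T_reps. Qed.

Lemma coset_reps_inj a b : (a < q)%N -> (b < q)%N -> T`_a - T`_b \in I -> a = b.
Proof.
case: T_reps => T_uniq _ _ _ reps a_lt b_lt abI.
have [t [_ t_unique]] := reps T`_a.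
have ta : t = T`_a by apply: t_unique; rewrite mem_nth // subrr pideal0.
have tb : t = T`_b by apply: t_unique; rewrite mem_nth.
by apply/eqP; rewrite -(nth_uniq 0 a_lt b_lt T_uniq) -ta -tb.
Qed.

Lemma expr_mul_notin_pideal_neq0 t u : (t < s)%N -> u \notin I -> g ^+ t * u != 0.
Proof.
move=> t_lt uNI; have [v uv1] := maximal_pideal_invertible maxI g_nil.1 uNI.
apply: contra (g_nil.2 t t_lt) => /eqP gtu0.
by rewrite -[g ^+ t]mulr1 -uv1 mulrA gtu0 mul0r.
Qed.

(* The factor g ^+ t records how many powers of g are still available before
   the expansion collapses to 0. *)
Lemma eq_digits_from_expansion n t (d e : nat -> nat) : (t + n <= s)%N ->
  (forall i, d i < q)%N -> (forall i, e i < q)%N ->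
  g ^+ t * \sum_(i < n) (T`_(d i) - T`_(e i)) * g ^+ i = 0 ->
  forall i, (i < n)%N -> d i = e i.
Proof.
elim: n t d e => [//|n IHn] t d e tn_le d_lt e_lt.
set S := \sum_(i < n) (T`_(d i.+1) - T`_(e i.+1)) * g ^+ i.
have -> : \sum_(i < n.+1) (T`_(d i) - T`_(e i)) * g ^+ i
          = T`_(d 0%N) - T`_(e 0%N) + g * S.
  rewrite big_ord_recl expr0 mulr1 mulr_sumr; congr (_ + _).
  by apply: eq_bigr => i _; rewrite exprS mulrCA.
move=> expansion0.
have de0 : d 0%N = e 0%N.
  apply: coset_reps_inj => //; apply: contraT => diffNI.
  have t_lt : (t < s)%N by apply: leq_trans tn_le; rewrite addnS ltnS leq_addr.
  have /(expr_mul_notin_pideal_neq0 t_lt) : T`_(d 0%N) - T`_(e 0%N) + g * S \notin I.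
    by apply: contra diffNI => sumI; rewrite -(addrK (g * S) (_ - _)) pidealB ?mem_pideal.
  by rewrite expansion0 eqxx.
rewrite de0 subrr add0r mulrA -exprSr in expansion0.
case=> [//|i] /= i_lt.
have tn_le' : (t.+1 + n <= s)%N by rewrite addSn -addnS.
exact: (IHn _ (d \o succn) (e \o succn) tn_le' (fun j => d_lt j.+1) (fun j => e_lt j.+1) expansion0).
Qed.

Lemma rho_inj a b : (a < q ^ s)%N -> (b < q ^ s)%N -> rho g s T a = rho g s T b -> a = b.
Proof.
move=> a_lt b_lt rho_ab.
have q_gt0 : (0 < q)%N by apply: ltnW coset_reps_gt1.
apply: (eq_from_base_digits q_gt0 a_lt b_lt) => i i_lt.
pose digit x j := (x %/ q ^ j %% q)%N.
apply: (@eq_digits_from_expansion s 0%N (digit a) (digit b)) => // [j|j|].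
- by rewrite ltn_mod.
- by rewrite ltn_mod.
rewrite expr0 mul1r; under eq_bigr do rewrite mulrBl.
by apply/eqP; rewrite sumrB subr_eq0; apply/eqP.
Qed.

Lemma agam_in_pideal j : agam g s T j \in I.
Proof.
rewrite /agam /rho; case: s => [|s']; first by rewrite big_ord0 pideal0.
have [_ _ T0 _ _] := T_reps.
rewrite big_ord_recl expn0 divn1 modnMr T0 mul0r add0r.
apply: (big_ind (fun x => x \in I)) => [||i _]; first exact: pideal0.
  exact: pidealD.
by rewrite exprS mulrCA mem_pideal.
Qed.

Lemma agam_inj a b : (a < q ^ s.-1)%N -> (b < q ^ s.-1)%N ->
  agam g s T a = agam g s T b -> a = b.
Proof.
have q_gt0 : (0 < q)%N by apply: ltnW coset_reps_gt1.
have scale_lt j : (j < q ^ s.-1)%N -> (q * j < q ^ s)%N.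
  by rewrite -(prednK nilpotency_index_gt0) expnS ltn_pmul2l.
move=> a_lt b_lt /(rho_inj (scale_lt _ a_lt) (scale_lt _ b_lt)) /eqP.
by rewrite eqn_pmul2l // => /eqP.
Qed.

Lemma alpha_cols_uniq k : uniq (alpha_cols g s T k).
Proof.
elim: k => [//|k IHk] /=.
apply: allpairs_uniq => //; first exact: iota_uniq.
move=> _ _ /allpairsP[[a c] [a_in _ ->]] /allpairsP[[b c'] [b_in _ ->]] /= [ab ->].
by move: a_in b_in; rewrite /= !mem_iota !add0n => a_lt b_lt; rewrite (rho_inj a_lt b_lt ab).
Qed.

Lemma beta_colsSS k : beta_cols g s T k.+2 =
  [seq 1 :: c | c <- alpha_cols g s T k.+1] ++
  [seq agam g s T j :: c | j <- iota 0 (q ^ s.-1), c <- beta_cols g s T k.+1].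
Proof. by []. Qed.

Lemma beta_cols_uniq k : uniq (beta_cols g s T k).
Proof.
elim: k => [|[|k] IHk] //; rewrite beta_colsSS cat_uniq; apply/and3P; split.
- by rewrite map_inj_uniq ?alpha_cols_uniq // => c c' [].
- apply/hasP => -[_ /allpairsP[[a c] [_ _ ->]] /mapP[c' _ [one_eq _]]].
  by case: maxI => _ /negP; rewrite -one_eq agam_in_pideal.
- apply: allpairs_uniq => //; first exact: iota_uniq.
  move=> _ _ /allpairsP[[a c] [a_in _ ->]] /allpairsP[[b c'] [b_in _ ->]] /= [ab ->].
  by move: a_in b_in; rewrite /= !mem_iota !add0n => a_lt b_lt; rewrite (agam_inj a_lt b_lt ab).
Qed.

Lemma beta_cols_pivot_one k c : c \in beta_cols g s T k -> pivot_one g c.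
Proof.
elim: k c => [|[|k] IHk] c //.
  by rewrite inE => /eqP ->; exists 0%N.
rewrite beta_colsSS mem_cat => /orP[/mapP[c' _ ->]|/allpairsP[[a c'] [_ c'_in ->]]].
  by exists 0%N.
have [p [p_lt c'p c'_low]] := IHk _ c'_in.
by exists p.+1; split=> // -[|r] /=; [rewrite agam_in_pideal | apply: c'_low].
Qed.

End GammaAdicExpansion.

Theorem proposition2p8 (R : finComNzRingType) (gam : R) (s : nat) (T : seq R)
    (Hchain : chain_ring R) (Hmax : maximal_ideal (pideal gam))
    (Hnil : nilpotency_index gam s) (HT : coset_reps gam T)
    (k : nat) (Hk : (1 <= k)%N) (i j : nat) (lam : R)
    (Hi : (i < size (beta_cols gam s T k))%N)
    (Hj : (j < size (beta_cols gam s T k))%N)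
    (Heq : nth [::] (beta_cols gam s T k) i
           = [seq lam * x | x <- nth [::] (beta_cols gam s T k) j]) :
  lam = 1 /\ i = j.
Proof.
have oneNI : (1 : R) \notin pideal gam by case: Hmax.
have lam1 : lam = 1.
  by apply: (pivot_one_scale_eq1 oneNI _ _ Heq); apply/(beta_cols_pivot_one HT)/mem_nth.
split=> //; apply/eqP.
rewrite -(nth_uniq [::] Hi Hj (beta_cols_uniq Hmax Hnil HT k)) Heq lam1.
by rewrite (eq_map (@mul1r R)) map_id.
Qed.
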